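(* Let $a\ge 2$ be even and let $c$ be an integer with $c\neq a$ and $\frac a2<c$. Then $U=\{(a,-a),(c,-c)\}\subseteq\mathcal{B}$ is unavoidable.
   Context: The bicyclic inverse semigroup is $\mathcal{B}=\{(a,b)\in\mathbb{Z}\times\mathbb{Z}\mid a\ge 0,\ a+b\ge 0\}$ with multiplication $(a,b)(c,d)=(\max\{c+d,a\}-d,\ b+d)$. A subset $U\subseteq\mathcal{B}$ is called avoidable if $\mathcal{B}$ can be partitioned into two subsets $A$ and $B$ such that no element of $U$ can be written as a product $xy$ of two distinct elements $x\neq y$ both in $A$, or both in $B$. A set is unavoidable if it is not avoidable. *)

From Stdlib Require Import ZArith.
Open Scope Z_scope.

(* The bicyclic inverse semigroup B = {(a,b) in Z x Z | a >= 0, a + b >= 0}. *)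
Definition inB (x : Z * Z) : Prop := 0 <= fst x /\ 0 <= fst x + snd x.

Definition bmul (x y : Z * Z) : Z * Z :=
  (Z.max (fst y + snd y) (fst x) - snd y, snd x + snd y).

(* U is avoidable: B can be partitioned into two sets A and B (encoded by a
   colouring col : elements of B -> bool, A = col^-1 true, B = col^-1 false)
   such that no u in U is a product xy of distinct x, y of the same colour. *)
Definition avoidable (U : Z * Z -> Prop) : Prop :=
  exists col : Z * Z -> bool,
    forall x y : Z * Z, inB x -> inB y -> x <> y -> col x = col y ->
      ~ U (bmul x y).

Definition unavoidable (U : Z * Z -> Prop) : Prop := ~ avoidable U.

(* Write a = 2k. The three elements (k,-k), (c-k,-(c-k)) and (k+1,-k) of B are
   pairwise distinct, and their three pairwise products are (c,-c), (2k,-2k)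
   and (c,-c). Any two-colouring of B gives two of them the same colour, so
   some element of U is a product of two distinct elements of one class. *)

From Stdlib Require Import ZArith Lia.
Open Scope Z_scope.

Lemma bool_pigeonhole (b1 b2 b3 : bool) : b1 = b2 \/ b1 = b3 \/ b2 = b3.
Proof. destruct b1, b2, b3; auto. Qed.

Lemma unavoidable_of_triangle (U : Z * Z -> Prop) (x y z : Z * Z) :
  inB x -> inB y -> inB z -> x <> y -> x <> z -> y <> z ->
  U (bmul x y) -> U (bmul x z) -> U (bmul y z) -> unavoidable U.
Proof.
  intros Bx By Bz Dxy Dxz Dyz Uxy Uxz Uyz [col Hcol].
  destruct (bool_pigeonhole (col x) (col y) (col z)) as [E | [E | E]].
  - exact (Hcol x y Bx By Dxy E Uxy).
  - exact (Hcol x z Bx Bz Dxz E Uxz).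
  - exact (Hcol y z By Bz Dyz E Uyz).
Qed.

Lemma inB_diag (m : Z) : 0 <= m -> inB (m, - m).
Proof. unfold inB; simpl; lia. Qed.

Lemma bmul_diag (m n : Z) : 0 <= m -> bmul (m, - m) (n, - n) = (m + n, - (m + n)).
Proof. intro Hm; unfold bmul; simpl; f_equal; lia. Qed.

Lemma bmul_diag_succ (m n : Z) :
  1 <= m -> bmul (m, - m) (n + 1, - n) = (m + n, - (m + n)).
Proof. intro Hm; unfold bmul; simpl; f_equal; lia. Qed.

Theorem lemma3p2 (a c : Z) :
  2 <= a -> Z.Even a -> c <> a -> a < 2 * c ->
  unavoidable (fun u => u = (a, - a) \/ u = (c, - c)).
Proof.
  intros Ha [k ->] Hca Hac.
  apply (unavoidable_of_triangle _ (k, - k) (c - k, - (c - k)) (k + 1, - k)).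
  - apply inB_diag; lia.
  - apply inB_diag; lia.
  - unfold inB; simpl; lia.
  - intro E; injection E; lia.
  - intro E; injection E; lia.
  - intro E; injection E; lia.
  - right; rewrite bmul_diag by lia; f_equal; lia.
  - left; rewrite bmul_diag_succ by lia; f_equal; lia.
  - right; rewrite bmul_diag_succ by lia; f_equal; lia.
Qed.
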